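(* For all $k,l\ge1$, $X\in\mathfrak{W}'_k$ and $Y\in\mathfrak{W}'_l$, there exists $V\in\mathfrak{W}'_{k+l}$ with $(\lambda(X)-X)(\lambda(Y)-Y)=\lambda(V)-V$ as operators on $\mathfrak{H}^1$.
   Context: Let $\mathfrak{H}=\mathbb{Q}\langle x,y\rangle$, $\mathfrak{H}^1=\mathbb{Q}+\mathfrak{H}y$, $\mathfrak{H}^1_n$ its homogeneous part of degree $n$; $L_w(w')=ww'$; products of operators denote composition. Let $z_k=x^{k-1}y$. The harmonic product $\ast$ on $\mathfrak{H}^1$ is the $\mathbb{Q}$-bilinear map with $1\ast w=w\ast1=w$ and $z_kw\ast z_lw'=z_k(w\ast z_lw')+z_l(z_kw\ast w')+z_{k+l}(w\ast w')$; $\mathcal{H}_w(v)=w\ast v$. $\mathfrak{W}$ is the $\mathbb{Q}$-span of the operators $\mathcal{H}_w$ ($w\in\mathfrak{H}^1$) on $\mathfrak{H}^1$; $\mathfrak{W}'$ (resp. $\mathfrak{W}'_n$) the $\mathbb{Q}$-span of the operators $L_{z_k}\mathcal{H}_w$ on $\mathfrak{H}^1$ with $k\ge1$, $w\in\mathfrak{H}^1$ (resp. $1\le k\le n$, $w\in\mathfrak{H}^1_{n-k}$). The $L_{z_k}\mathcal{H}_w$ over distinct pairs $(k,w)$, $w$ a word, are linearly independent, and $\lambda:\mathfrak{W}'\to\mathfrak{W}$ is the $\mathbb{Q}$-linear map with $\lambda(L_{z_k}\mathcal{H}_w)=\mathcal{H}_{z_kw}$. *)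

From HB Require Import structures.
From mathcomp Require Import all_boot all_order all_algebra.
Set Implicit Arguments. Unset Strict Implicit. Unset Printing Implicit Defensive.
Import GRing.Theory Num.Theory.
Local Open Scope ring_scope.

(* A word of H^1 = Q + H y is a word in the letters z_k = x^(k-1) y (k >= 1);
   we encode the word z_{k1} z_{k2} ... z_{kr} as the sequence [:: k1; ...; kr]
   (the empty sequence is the empty word 1). *)
Definition word := seq nat.
Definition zword (w : word) : bool := all (fun k => (0 < k)%N) w.
Definition wdeg (w : word) : nat := sumn w.

(* An element of H^1 is a finite formal Q-linear combination of words,
   represented as a list of (coefficient, word) pairs. *)
Definition poly := seq (rat * word).
Definition inH1 (p : poly) : bool := all (fun cw => zword cw.2) p.
Definition coef (p : poly) (u : word) : rat :=
  \sum_(cw <- p | cw.2 == u) cw.1.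

Definition scalep (c : rat) (p : poly) : poly := [seq (c * cw.1, cw.2) | cw <- p].
Definition addp (p q : poly) : poly := p ++ q.
Definition subp (p q : poly) : poly := p ++ scalep (-1) q.
Definition consp (k : nat) (p : poly) : poly := [seq (cw.1, k :: cw.2) | cw <- p].
Definition linext (f : word -> poly) (p : poly) : poly :=
  flatten [seq scalep cw.1 (f cw.2) | cw <- p].

Fixpoint harm (u : word) : word -> poly :=
  match u with
  | [::] => fun v => [:: (1, v)]
  | a :: u' =>
      fix harm_v (v : word) : poly :=
        match v with
        | [::] => [:: (1, a :: u')]
        | b :: v' => consp a (harm u' v) ++ consp b (harm_v v')
                     ++ consp (a + b)%N (harm u' v')
        end
  end.

Definition op := poly -> poly.
Definition Hop (w : word) : op := linext (harm w).
Definition Lz (k : nat) : op := consp k.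

(* An element of W' is given as a finite Q-linear combination
   sum_i c_i L_{z_{k_i}} H_{w_i} with w_i words of H^1; it is represented by
   the list of triples (c_i, k_i, w_i). *)
Definition comb := seq (rat * nat * word).

Definition opW' (X : comb) : op :=
  fun p => flatten [seq scalep t.1.1 (Lz t.1.2 (Hop t.2 p)) | t <- X].
(* lambda(X) = sum_i c_i H_{z_{k_i} w_i}  (well defined by the linear
   independence of the L_{z_k} H_w stated in the context) *)
Definition lam (X : comb) : op :=
  fun p => flatten [seq scalep t.1.1 (Hop (t.1.2 :: t.2) p) | t <- X].

Definition lamsub (X : comb) : op := fun p => subp (lam X p) (opW' X p).

Definition inW'n (n : nat) (X : comb) : bool :=
  all (fun t => [&& (1 <= t.1.2 <= n)%N, zword t.2 & wdeg t.2 == (n - t.1.2)%N]) X.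

Definition op_eq_H1 (A B : op) : Prop :=
  forall p : poly, inH1 p -> forall u : word, coef (A p) u = coef (B p) u.

From Pilot Require Import Defs.
From mathcomp Require Import all_boot all_order all_algebra zify.
Set Implicit Arguments. Unset Strict Implicit. Unset Printing Implicit Defensive.
Import GRing.Theory.
(* Defs.poly is shadowed by the polynomial library; restore it. *)
Import Pilot.Defs.
Local Open Scope ring_scope.

(* The proof is by duality.  An element p of H^1 is tested against word
   functions g : word -> rat through the pairing <p, g> = sum c * g(w) over
   the terms c*w of p; coefficients are the pairings with indicator functions
   (coef_pairing), so operator identities reduce to identities of pairings.
   - The harmonic product is tested through hpair w v g = <w * v, g>, which
     obeys the three-term recursion of *; associativity of * becomes
     hpair_assoc.
   - The operator lambda(X) - X is tested through dlam X v g =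
     <(lambda(X) - X) v, g> (pairing_lamsub).  It vanishes on the empty word
     and, on a word z_m v, the z_k-part of z_k w * z_m v cancels against
     L_{z_k} H_w, leaving z_m (z_k w * v) + z_{k+m} (w * v) (dlam_cons).
   - The witness V = prodW X Y collects, for terms c L_{z_k} H_w of X and
     d L_{z_l} H_{w'} of Y, the three terms of the recursion of
     c d (z_k w * z_l w'), so that lambda(V) = lambda(X) lambda(Y).
     Unfolding dlam_cons twice and using associativity gives
     dlam Y v (dlam X . g) = dlam V v g (dlam_prodW), the operator identity.
   - Harmonic products of words of H^1 are homogeneous words of H^1
     (harm_homog), whence V lies in W'_{k+l} (prodW_inW'). *)

Definition pairing (p : poly) (g : word -> rat) : rat :=
  \sum_(cw <- p) cw.1 * g cw.2.

Lemma pairing1 c w g : pairing [:: (c, w)] g = c * g w.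
Proof. by rewrite /pairing big_seq1. Qed.

Lemma pairing_cat p q g : pairing (p ++ q) g = pairing p g + pairing q g.
Proof. by rewrite /pairing big_cat. Qed.

Lemma pairing_flatten (I : Type) (r : seq I) (f : I -> poly) g :
  pairing (flatten [seq f i | i <- r]) g = \sum_(i <- r) pairing (f i) g.
Proof. by rewrite /pairing big_flatten /= big_map. Qed.

Lemma pairing_consp k p g : pairing (consp k p) g = pairing p (fun s => g (k :: s)).
Proof. by rewrite /pairing /consp big_map. Qed.

Lemma pairing_scalep c p g : pairing (scalep c p) g = c * pairing p g.
Proof.
rewrite /pairing /scalep big_map mulr_sumr.
by apply: eq_bigr => cw _ /=; rewrite mulrA.
Qed.

Lemma pairing_linext f p g :
  pairing (linext f p) g = pairing p (fun w => pairing (f w) g).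
Proof.
rewrite /linext pairing_flatten /pairing.
by apply: eq_bigr => cw _; rewrite -/(pairing _ _) pairing_scalep.
Qed.

Lemma eq_pairing p g g' : g =1 g' -> pairing p g = pairing p g'.
Proof. by move=> eq_g; apply: eq_bigr => cw _; rewrite eq_g. Qed.

Lemma pairing_add p f1 f2 :
  pairing p (fun s => f1 s + f2 s) = pairing p f1 + pairing p f2.
Proof. by rewrite /pairing -big_split; apply: eq_bigr => cw _; rewrite mulrDr. Qed.

Lemma pairing_sub p f1 f2 :
  pairing p (fun s => f1 s - f2 s) = pairing p f1 - pairing p f2.
Proof. by rewrite /pairing -sumrB; apply: eq_bigr => cw _; rewrite mulrBr. Qed.

Lemma pairing_mul p c f : pairing p (fun s => c * f s) = c * pairing p f.
Proof. by rewrite /pairing mulr_sumr; apply: eq_bigr => cw _; rewrite mulrCA. Qed.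

Lemma pairing_sum p (I : Type) (r : seq I) F :
  pairing p (fun s => \sum_(i <- r) F i s) = \sum_(i <- r) pairing p (F i).
Proof.
rewrite /pairing; under eq_bigr => cw _ do rewrite mulr_sumr.
by rewrite exchange_big.
Qed.

Lemma coef_pairing p u : coef p u = pairing p (fun s => (s == u)%:R).
Proof.
rewrite /coef /pairing big_mkcond; apply: eq_bigr => cw _.
by case: eqP => _; rewrite ?mulr1 ?mulr0.
Qed.

Definition hpair (w v : word) (g : word -> rat) : rat := pairing (harm w v) g.

Lemma harm_nil_r w : harm w [::] = [:: (1, w)].
Proof. by case: w. Qed.

Lemma harm_cons a u b v : harm (a :: u) (b :: v) =
  consp a (harm u (b :: v)) ++ consp b (harm (a :: u) v) ++ consp (a + b)%N (harm u v).
Proof. by []. Qed.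

Lemma hpair_nil_l w g : hpair [::] w g = g w.
Proof. by rewrite /hpair pairing1 mul1r. Qed.

Lemma hpair_nil_r w g : hpair w [::] g = g w.
Proof. by rewrite /hpair harm_nil_r pairing1 mul1r. Qed.

Lemma hpair_cons a u b v g : hpair (a :: u) (b :: v) g =
  hpair u (b :: v) (fun s => g (a :: s)) + hpair (a :: u) v (fun s => g (b :: s))
  + hpair u v (fun s => g ((a + b)%N :: s)).
Proof. by rewrite /hpair harm_cons !pairing_cat !pairing_consp addrA. Qed.

Lemma eq_hpair w v g g' : g =1 g' -> hpair w v g = hpair w v g'.
Proof. exact: eq_pairing. Qed.

Lemma pairing_hpair_cons_l P a b x g :
  pairing P (fun s => hpair (a :: s) (b :: x) g) =
  pairing P (fun s => hpair s (b :: x) (fun s0 => g (a :: s0)))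
  + pairing P (fun s => hpair (a :: s) x (fun s0 => g (b :: s0)))
  + pairing P (fun s => hpair s x (fun s0 => g ((a + b)%N :: s0))).
Proof. by rewrite -!pairing_add; apply: eq_pairing => s; rewrite hpair_cons. Qed.

Lemma pairing_hpair_cons_r P a u b g :
  pairing P (fun s => hpair (a :: u) (b :: s) g) =
  pairing P (fun s => hpair u (b :: s) (fun s0 => g (a :: s0)))
  + pairing P (fun s => hpair (a :: u) s (fun s0 => g (b :: s0)))
  + pairing P (fun s => hpair u s (fun s0 => g ((a + b)%N :: s0))).
Proof. by rewrite -!pairing_add; apply: eq_pairing => s; rewrite hpair_cons. Qed.

(* Associativity of the harmonic product, (u * v) * x = u * (v * x), tested
   against g.  By induction on u, v, x: for nonempty words both sides expand
   into nine terms; the three terms starting with z_c (resp. z_a) recombine by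
   the induction hypothesis on x (resp. u), and the remaining ones match by
   the induction hypotheses on u and v. *)
Lemma hpair_assoc u v x g :
  pairing (harm u v) (fun s => hpair s x g) = pairing (harm v x) (fun s => hpair u s g).
Proof.
elim: u v x g => [|a u IHu] v x g.
  by rewrite pairing1 mul1r; apply: eq_pairing => s; rewrite hpair_nil_l.
elim: v x g => [|b v IHv] x g.
  by rewrite harm_nil_r !pairing1 !mul1r.
elim: x g => [|c x IHx] g.
  by rewrite harm_nil_r pairing1 mul1r; apply: eq_pairing => s; rewrite hpair_nil_r.
rewrite [in LHS]harm_cons ![in LHS]pairing_cat ![in LHS]pairing_consp.
rewrite ![in LHS]pairing_hpair_cons_l.
have recombine_c :
  pairing (harm u (b :: v)) (fun s => hpair (a :: s) x (fun s0 => g (c :: s0)))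
  + pairing (harm (a :: u) v) (fun s => hpair (b :: s) x (fun s0 => g (c :: s0)))
  + pairing (harm u v) (fun s => hpair ((a + b)%N :: s) x (fun s0 => g (c :: s0)))
  = pairing (harm (b :: v) x) (fun s => hpair (a :: u) s (fun s0 => g (c :: s0))).
  by rewrite -IHx [in RHS]harm_cons !pairing_cat !pairing_consp addrA.
rewrite [in RHS]harm_cons ![in RHS]pairing_cat ![in RHS]pairing_consp.
rewrite ![in RHS]pairing_hpair_cons_r.
have recombine_a :
  pairing (harm v (c :: x)) (fun s => hpair u (b :: s) (fun s0 => g (a :: s0)))
  + pairing (harm (b :: v) x) (fun s => hpair u (c :: s) (fun s0 => g (a :: s0)))
  + pairing (harm v x) (fun s => hpair u ((b + c)%N :: s) (fun s0 => g (a :: s0)))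
  = pairing (harm u (b :: v)) (fun s => hpair s (c :: x) (fun s0 => g (a :: s0))).
  by rewrite IHu [in RHS]harm_cons !pairing_cat !pairing_consp addrA.
rewrite [LHS](@GRing.add rat).[AC (3*(3*3)) ((2*5*8)*1*3*4*6*7*9)] recombine_c.
rewrite [RHS](@GRing.add rat).[AC (3*(3*3)) ((1*4*7)*2*3*5*6*8*9)] recombine_a.
rewrite !IHu !IHv addnA.
by rewrite [LHS](@GRing.add rat).[ACl 2*4*6*1*3*5*7].
Qed.

(* The operator lambda(X) - X tested against g: dlam X v g = <(lambda(X) - X) v, g>. *)
Definition dlam (X : comb) (v : word) (g : word -> rat) : rat :=
  \sum_(t <- X) t.1.1 * (hpair (t.1.2 :: t.2) v g - hpair t.2 v (fun s => g (t.1.2 :: s))).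

Lemma pairing_lamsub X p g : pairing (lamsub X p) g = pairing p (fun v => dlam X v g).
Proof.
rewrite /lamsub /subp pairing_cat pairing_scalep /lam /opW' !pairing_flatten.
rewrite /dlam pairing_sum -mulN1r mulr_sumr -big_split /=.
apply: eq_bigr => t _.
rewrite pairing_mul pairing_sub !pairing_scalep /Hop /Lz pairing_consp !pairing_linext.
by rewrite mulr1 mulN1r mulrBr.
Qed.

Lemma dlam_nil X g : dlam X [::] g = 0.
Proof. by rewrite /dlam big1_seq // => t _; rewrite !hpair_nil_r subrr mulr0. Qed.

Lemma dlam_cons X m v g : dlam X (m :: v) g =
  \sum_(t <- X) t.1.1 * (hpair (t.1.2 :: t.2) v (fun s => g (m :: s))
                         + hpair t.2 v (fun s => g ((t.1.2 + m)%N :: s))).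
Proof.
apply: eq_bigr => t _; congr (_ * _).
by rewrite hpair_cons; apply/eqP; rewrite subr_eq [X in _ == X]addrC !addrA.
Qed.

Lemma dlam_flatten (I : Type) (r : seq I) (f : I -> comb) v g :
  dlam (flatten [seq f i | i <- r]) v g = \sum_(i <- r) dlam (f i) v g.
Proof. by rewrite /dlam big_flatten /= big_map. Qed.

Lemma hpair_dlam_cons X w v m g : hpair w v (fun s => dlam X (m :: s) g) =
  \sum_(t <- X) t.1.1 * (hpair w v (fun s => hpair (t.1.2 :: t.2) s (fun s0 => g (m :: s0)))
       + hpair w v (fun s => hpair t.2 s (fun s0 => g ((t.1.2 + m)%N :: s0)))).
Proof.
rewrite (eq_hpair _ _ (fun s => dlam_cons X m s g)) /hpair pairing_sum.
by apply: eq_bigr => t _; rewrite pairing_mul pairing_add.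
Qed.

Lemma sum_scaled_terms (a : rat) (k : nat) (P : poly) v m g :
  \sum_(t <- [seq (a * e.1, k, e.2) | e <- P])
     t.1.1 * (hpair (t.1.2 :: t.2) v (fun s => g (m :: s))
              + hpair t.2 v (fun s => g ((t.1.2 + m)%N :: s)))
  = a * pairing P (fun u => hpair (k :: u) v (fun s => g (m :: s))
              + hpair u v (fun s => g ((k + m)%N :: s))).
Proof.
rewrite big_map /pairing mulr_sumr.
by apply: eq_bigr => e _ /=; rewrite mulrA.
Qed.

(* For terms x = c L_{z_k} H_w and y = d L_{z_l} H_{w'}, the element
   c d (L_{z_k} H_{w * z_l w'} + L_{z_l} H_{z_k w * w'} + L_{z_{k+l}} H_{w * w'})
   of W', whose lambda is c d H_{z_k w * z_l w'}; prodW X Y sums them. *)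
Definition prod_terms (x y : rat * nat * word) : comb :=
  [seq (x.1.1 * y.1.1 * e.1, x.1.2, e.2) | e <- harm x.2 (y.1.2 :: y.2)] ++
  [seq (x.1.1 * y.1.1 * e.1, y.1.2, e.2) | e <- harm (x.1.2 :: x.2) y.2] ++
  [seq (x.1.1 * y.1.1 * e.1, (x.1.2 + y.1.2)%N, e.2) | e <- harm x.2 y.2].

Definition prodW (X Y : comb) : comb :=
  flatten [seq flatten [seq prod_terms x y | x <- X] | y <- Y].

Lemma dlam_prodW X Y v g : dlam Y v (fun s => dlam X s g) = dlam (prodW X Y) v g.
Proof.
case: v => [|m v]; first by rewrite !dlam_nil.
rewrite dlam_cons /prodW dlam_flatten; apply: eq_bigr => y _.
rewrite !hpair_dlam_cons dlam_flatten -big_split mulr_sumr; apply: eq_bigr => x _.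
rewrite dlam_cons !big_cat /= !sum_scaled_terms !pairing_add.
case: x => [[c k] w]; case: y => [[d l] w'] /=.
rewrite -/(harm (k :: w) w') /hpair -!hpair_assoc.
rewrite [in LHS]harm_cons ![in LHS]pairing_cat ![in LHS]pairing_consp addnA.
rewrite -mulrDr mulrA [d * c]mulrC -!mulrDr; congr (_ * _).
by rewrite [LHS](@GRing.add rat).[AC (((1*2)*1)*2) ((1*4)*((2*5)*(3*6)))].
Qed.

Lemma harm_homog a b : zword a -> zword b ->
  all (fun cw => zword cw.2 && (wdeg cw.2 == wdeg a + wdeg b)%N) (harm a b).
Proof.
elim: a b => [|x a IHa] b; first by move=> _ /= ->; rewrite eqxx.
elim: b => [|y b IHb]; first by move=> /= ->; rewrite addn0 eqxx.
move=> zxa zyb; have /andP [x_gt0 za] := zxa; have /andP [y_gt0 zb] := zyb.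
rewrite harm_cons !all_cat !all_map; apply/and3P; split; apply/allP => cw /=.
- move=> /(allP (IHa _ za zyb)) /andP [-> /eqP]; rewrite /wdeg /= => deg_cw.
  by rewrite x_gt0 deg_cw; apply/eqP; lia.
- move=> /(allP (IHb zxa zb)) /andP [-> /eqP]; rewrite /wdeg /= => deg_cw.
  by rewrite y_gt0 deg_cw; apply/eqP; lia.
- move=> /(allP (IHa _ za zb)) /andP [-> /eqP]; rewrite /wdeg /= => deg_cw.
  by rewrite addn_gt0 x_gt0 deg_cw; apply/eqP; lia.
Qed.

Definition inW'_term (n : nat) (t : rat * nat * word) : bool :=
  [&& (1 <= t.1.2 <= n)%N, zword t.2 & wdeg t.2 == (n - t.1.2)%N].

Lemma prod_terms_inW' K L x y : inW'_term K x -> inW'_term L y ->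
  all (inW'_term (K + L)) (prod_terms x y).
Proof.
case: x => [[c k] w]; case: y => [[d l] w']; rewrite /inW'_term /=.
move=> /and3P [/andP [k_gt0 kK] zw /eqP dw] /and3P [/andP [l_gt0 lL] zw' /eqP dw'].
have zlw' : zword (l :: w') by rewrite /= l_gt0.
have zkw : zword (k :: w) by rewrite /= k_gt0.
rewrite /prod_terms !all_cat !all_map; apply/and3P; split;
  apply/allP => e /=.
- move=> /(allP (harm_homog zw zlw')) /andP [-> /eqP ->] /=.
  rewrite dw dw'. lia.
- move=> /(allP (harm_homog zkw zw')) /andP [-> /eqP ->] /=.
  rewrite dw dw'. lia.
- move=> /(allP (harm_homog zw zw')) /andP [-> /eqP ->] /=.
  rewrite dw dw'. lia.
Qed.

Lemma prodW_inW' K L X Y : inW'n K X -> inW'n L Y -> inW'n (K + L) (prodW X Y).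
Proof.
move=> /allP inX /allP inY; apply/allP => t.
move=> /flatten_mapP [y /inY y_in] /flatten_mapP [x /inX x_in].
exact: (allP (prod_terms_inW' x_in y_in)).
Qed.

Theorem mainTheorem13 (k l : nat) (X Y : comb) :
  (1 <= k)%N -> (1 <= l)%N -> inW'n k X -> inW'n l Y ->
  exists V : comb, inW'n (k + l) V /\
    op_eq_H1 (fun p => lamsub X (lamsub Y p)) (lamsub V).
Proof.
move=> _ _ inX inY; exists (prodW X Y); split; first exact: prodW_inW'.
move=> p _ u; rewrite !coef_pairing !pairing_lamsub.
by apply: eq_pairing => v; exact: dlam_prodW.
Qed.
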